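(* $\mathcal{SED} \cap \mathcal{USAT} \subsetneq \mathcal{VMU}$; moreover every unsatisfiable multi-clause-set $F$ with $\sigma(F) = \delta(F)$ has its underlying clause-set in $\mathcal{VMU}$.
   Context: Literals come with a fixed-point-free involution $x \mapsto \overline{x}$; variables are positive literals. A clause is a finite set $C$ of literals with $C \cap \overline{C} = \emptyset$; a clause-set is a finite set of clauses; a multi-clause-set assigns finitely many clauses a positive multiplicity, and its underlying clause-set is the set of those clauses. $\mathrm{var}(F)$, $n(F) = |\mathrm{var}(F)|$, $c(F)$ the number of clauses counted with multiplicity, $\delta(F) = c(F) - n(F)$. Surplus: $\sigma(F) = \min_{\emptyset \ne V \subseteq \mathrm{var}(F)} (\#\{\text{clauses (with multiplicity) containing a variable of } V\} - |V|)$ for $n(F)>0$, $\sigma(F) = 0$ otherwise. $F$ is satisfiable iff some assignment of truth values makes a literal of every clause true; a multi-clause-set is (un)satisfiable iff its underlying clause-set is. $\mathcal{USAT}$ is the class of unsatisfiable clause-sets; $\mathcal{SED}$ is the class of clause-sets $F$ with $\sigma(F) = \delta(F)$. $\mathcal{VMU}$ is the class of unsatisfiable clause-sets $F$ such that every unsatisfiable $F' \subseteq F$ has $\mathrm{var}(F') = \mathrm{var}(F)$. *)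

From HB Require Import structures.
From mathcomp Require Import all_boot all_order all_algebra.
From mathcomp Require Import finmap.
Set Implicit Arguments. Unset Strict Implicit. Unset Printing Implicit Defensive.
Import Order.TTheory GRing.Theory Num.Theory.
Local Open Scope fset_scope.

(* Variables are natural numbers; a literal is a pair (v, b): b = true is
   the positive literal v, b = false its complement. *)
Definition lit := (nat * bool)%type.
Definition litvar (l : lit) : nat := l.1.
Definition compl (l : lit) : lit := (l.1, ~~ l.2).

Definition clause_t := {fset lit}.
Definition is_clause (C : clause_t) : bool :=
  [forall l : C, compl (val l) \notin C].

Definition clauseset := {fset clause_t}.
Definition is_clauseset (F : clauseset) : bool := all is_clause F.

(* A multi-clause-set: a finite list of clauses, the multiplicity of a clause
   being its number of occurrences (order is irrelevant). *)
Definition mclauseset := seq clause_t.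
Definition is_mclauseset (F : mclauseset) : bool := all is_clause F.
Definition underlying (F : mclauseset) : clauseset := [fset C | C in F].
Definition as_multi (F : clauseset) : mclauseset := enum_fset F.

Definition varC (C : clause_t) : {fset nat} := [fset litvar l | l in C].
Definition varM (F : mclauseset) : {fset nat} := \bigcup_(C <- F) varC C.
Definition nM (F : mclauseset) : nat := #|` varM F|.
Definition cM (F : mclauseset) : nat := size F.
Definition deltaM (F : mclauseset) : int := (cM F)%:Z - (nM F)%:Z.

Definition occ (F : mclauseset) (V : {fset nat}) : nat :=
  count (fun C => [exists v : V, val v \in varC C]) F.

Definition surplus_vals (F : mclauseset) : seq int :=
  [seq ((occ F V)%:Z - (#|` V|)%:Z)%R | V <- enum_fset (fpowerset (varM F)) & V != fset0].

(* minimum over nonempty V subset of var(F); 0 if n(F) = 0 *)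
Definition surplusM (F : mclauseset) : int :=
  match surplus_vals F with
  | [::] => 0%R
  | x :: s => foldr Order.min x s
  end.

Definition var (F : clauseset) : {fset nat} := varM (as_multi F).
Definition surplus (F : clauseset) : int := surplusM (as_multi F).
Definition delta (F : clauseset) : int := deltaM (as_multi F).

Definition sat_lit (f : nat -> bool) (l : lit) : bool := f l.1 == l.2.
Definition satisfiable (F : clauseset) : Prop :=
  exists f : nat -> bool, forall C, C \in F -> exists2 l, l \in C & sat_lit f l.
Definition msatisfiable (F : mclauseset) : Prop := satisfiable (underlying F).

Definition USAT (F : clauseset) : Prop := is_clauseset F /\ ~ satisfiable F.
Definition SED (F : clauseset) : Prop := is_clauseset F /\ surplus F = delta F.
Definition VMU (F : clauseset) : Prop :=
  USAT F /\ forall F' : clauseset, F' `<=` F -> ~ satisfiable F' -> var F' = var F.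

(* If sigma(F) = delta(F), then for every set U of variables not covering
   var(F) the clauses of F with all their variables in U number at most
   |var(F) & U|: the clauses meeting V = var(F) \ U are at least
   sigma(F) + |V| many.  So a sub-clause-set F' with var(F') a proper subset
   of var(F) satisfies Hall's condition (every k of its clauses involve at
   least k variables), and such clause-sets are satisfiable.  The latter is
   proved by induction on the number of clauses, splitting along a critical
   set of variables as in Hall's marriage theorem.  For strictness, {bot} is
   in VMU, but sigma({bot}) = 0 <> 1 = delta({bot}). *)
From HB Require Import structures.
From mathcomp Require Import all_boot all_order all_algebra.
From mathcomp Require Import finmap zify.
From Stdlib Require Import Classical.
Set Implicit Arguments. Unset Strict Implicit. Unset Printing Implicit Defensive.
Import Order.TTheory GRing.Theory Num.Theory.
Local Open Scope fset_scope.

Lemma in_varC x (C : clause_t) :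
  reflect (exists2 l, l \in C & x = l.1) (x \in varC C).
Proof.
apply: (iffP idP) => [/imfsetP [l lC ->]|[l lC ->]]; first by exists l.
by apply/imfsetP; exists l.
Qed.

Lemma in_varM x (F : mclauseset) :
  reflect (exists2 C, C \in F & x \in varC C) (x \in varM F).
Proof.
apply: (iffP idP) => [/bigfcupP [C /andP[CF _] xC]|[C CF xC]]; first by exists C.
by apply/bigfcupP; exists C; rewrite ?CF.
Qed.

Lemma varM_sub (F G : mclauseset) : {subset F <= G} -> varM F `<=` varM G.
Proof.
by move=> FG; apply/fsubsetP => x /in_varM [C /FG CG xC]; apply/in_varM; exists C.
Qed.

Lemma var_underlying (F : mclauseset) : var (underlying F) = varM F.
Proof.
apply/fsetP => x; apply/in_varM/in_varM => [[_ /imfsetP [C CF ->] xC]|[C CF xC]].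
  by exists C.
by exists C => //; apply/imfsetP; exists C.
Qed.

Lemma underlying_as_multi (F : clauseset) : underlying (as_multi F) = F.
Proof. by apply/fsetP => C; apply/imfsetP/idP => [[D DF ->] //|CF]; exists C. Qed.

Lemma leq_count_uniq (T : eqType) (p : pred T) (s1 s2 : seq T) :
  uniq s1 -> {subset s1 <= s2} -> count p s1 <= count p s2.
Proof.
move=> s1_uniq s12; rewrite -!size_filter.
apply: uniq_leq_size; first exact: filter_uniq.
by move=> x; rewrite !mem_filter => /andP[-> /s12 ->].
Qed.

Lemma foldr_min_le (d : Order.disp_t) (T : orderType d) (x : T) s y :
  y \in x :: s -> (foldr Order.min x s <= y)%O.
Proof.
elim: s y => [|z s IH] y /=; first by rewrite inE => /eqP ->.
rewrite !inE ge_min => /or3P[/eqP->|/eqP->|ys].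
- by rewrite (IH _ (mem_head _ _)) orbT.
- by rewrite lexx.
- by rewrite IH ?orbT // inE ys orbT.
Qed.

Definition within (U : {fset nat}) (C : clause_t) : bool := varC C `<=` U.

Definition hall (G : seq clause_t) : Prop :=
  forall U : {fset nat}, count (within U) G <= #|`U|.

Definition critical (G : seq clause_t) (U : {fset nat}) : bool :=
  (0 < count (within U) G < size G) && (count (within U) G == #|`U|).

Definition sat_clause (f : nat -> bool) (C : clause_t) : Prop :=
  exists2 l, l \in C & sat_lit f l.

Definition drop_vars (U : {fset nat}) (C : clause_t) : clause_t :=
  [fset l in C | litvar l \notin U].

Definition override (U : {fset nat}) (f g : nat -> bool) (v : nat) : bool :=
  if v \in U then f v else g v.

Lemma within_drop_vars U U' C : within U' (drop_vars U C) = within (U `|` U') C.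
Proof.
apply/fsubsetP/fsubsetP => sub x.
  move=> /in_varC [l lC ->]; rewrite in_fsetU; case: (boolP (l.1 \in U)) => //= lU.
  by apply: sub; apply/in_varC; exists l; rewrite // !inE lC.
move=> /in_varC [l]; rewrite !inE => /andP[lC lU] ->.
by have := sub l.1; rewrite in_fsetU (negbTE lU); apply; apply/in_varC; exists l.
Qed.

Lemma count_within_drop_vars U U' G :
  count (within U') (map (drop_vars U) G) = count (within (U `|` U')) G.
Proof. by rewrite count_map; apply: eq_count => C /=; rewrite within_drop_vars. Qed.

Lemma hall_filter p G : hall G -> hall (filter p G).
Proof.
move=> hG U; rewrite count_filter; apply: leq_trans (hG U).
by apply: sub_count => C /andP[].
Qed.

Lemma hall_no_empty_clause G : hall G -> fset0 \notin G.
Proof.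
move=> hG; apply/negP => G0; have := hG fset0.
rewrite cardfs0 leqNgt -has_count => /hasPn /(_ _ G0); apply/negP/negPn.
by apply/fsubsetP => x /in_varC [l]; rewrite in_fset0.
Qed.

(* The clauses within U `|` U' number at most |U `|` U'|, and tightness puts
   exactly |U| of them within U. *)
Lemma hall_drop_tight G U : hall G -> count (within U) G = #|`U| ->
  hall (map (drop_vars U) (filter (predC (within U)) G)).
Proof.
move=> hG tight U'; rewrite count_within_drop_vars count_filter.
have count_split : (count (within U) G +
    count (predI (within (U `|` U')) (predC (within U))) G)%N =
    count (within (U `|` U')) G.
  transitivity (size [seq C <- G | within (U `|` U') C]); last exact: size_filter.
  rewrite -(count_predC (within U)) !count_filter.
  congr (_ + _)%N; apply: eq_count => C /=; last by rewrite andbC.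
  by rewrite andb_idr // => /fsubset_trans; apply; exact: fsubsetUl.
have := hG (U `|` U'); have := cardfsUI U U'; lia.
Qed.

Lemma hall_drop_loose C G v : hall (C :: G) ->
  ~ (exists U, critical (C :: G) U) -> hall (map (drop_vars [fset v]) G).
Proof.
move=> hG loose U'; rewrite count_within_drop_vars.
have not_critical : ~~ critical (C :: G) (v |` U').
  by apply/negP => crit; apply: loose; exists (v |` U').
have := hG (v |` U'); have := count_size (within (v |` U')) G.
move: not_critical; rewrite /critical cardfsU1 /=.
by case: (within _ C) => /=; case: (v \in U') => /=; lia.
Qed.

Lemma sat_lit_override_in U f g l :
  l.1 \in U -> sat_lit (override U f g) l = sat_lit f l.
Proof. by rewrite /sat_lit /override => ->. Qed.

Lemma sat_clause_override_within U f g C :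
  within U C -> sat_clause f C -> sat_clause (override U f g) C.
Proof.
move=> CU [l lC fl]; exists l; rewrite // sat_lit_override_in //.
by apply: (fsubsetP CU); apply/in_varC; exists l.
Qed.

Lemma sat_clause_override_drop U f g C :
  sat_clause g (drop_vars U C) -> sat_clause (override U f g) C.
Proof.
move=> [l]; rewrite !inE => /andP[lC lU] gl; exists l => //.
by rewrite /sat_lit /override (negbTE lU).
Qed.

Theorem hall_satisfiable G :
  hall G -> exists f, forall C, C \in G -> sat_clause f C.
Proof.
have [n] := ubnP (size G); elim: n G => // n IH G /ltnSE sizeG hG.
case: (classic (exists U, critical G U)) => [[U]|loose].
  case/andP => /andP[cnt_gt0 cnt_lt] /eqP tight.
  have [|f sat_f] := IH [seq C <- G | within U C] _ (hall_filter _ hG).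
    by rewrite size_filter (leq_trans cnt_lt).
  have [|g sat_g] := IH _ _ (hall_drop_tight hG tight).
    rewrite size_map size_filter (leq_trans _ sizeG) //.
    by have := count_predC (within U) G; lia.
  exists (override U f g) => C CG; case: (boolP (within U C)) => CU.
    by apply: sat_clause_override_within (sat_f _ _); rewrite // mem_filter CU.
  by apply/sat_clause_override_drop/sat_g/map_f; rewrite mem_filter /= CU.
(* Without a critical set, any literal of a clause may be fixed. *)
case: G sizeG hG loose => [|C G] sizeG hG loose; first by exists xpredT.
have [l lC] : exists l, l \in C.
  apply/fset0Pn; apply: contraNneq (hall_no_empty_clause hG) => <-.
  exact: mem_head.
have [|g sat_g] := IH _ _ (hall_drop_loose l.1 hG loose).
  by rewrite size_map.
exists (override [fset l.1] (fun=> l.2) g) => D; rewrite inE => /predU1P [->|DG].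
  by exists l; rewrite // sat_lit_override_in ?fset11 // /sat_lit eqxx.
exact/sat_clause_override_drop/sat_g/map_f.
Qed.

Lemma surplusM_le (F : mclauseset) V : V `<=` varM F -> V != fset0 ->
  (surplusM F <= (occ F V)%:Z - (#|`V|)%:Z)%R.
Proof.
move=> sub nV; rewrite /surplusM.
have : ((occ F V)%:Z - (#|`V|)%:Z)%R \in surplus_vals F.
  apply: (map_f (fun V => ((occ F V)%:Z - (#|`V|)%:Z)%R)).
  by rewrite mem_filter nV fpowersetE.
case: (surplus_vals F) => // x s; exact: foldr_min_le.
Qed.

Lemma occ_add_count_within (F : mclauseset) U :
  (occ F (varM F `\` U) + count (within U) F)%N = size F.
Proof.
rewrite -(count_predC (within U) F) addnC; congr (_ + _)%N.
apply: eq_in_count => C CF /=; apply/existsP/fsubsetPn.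
  by move=> [[x]] /=; rewrite in_fsetD => /andP[xU _] xC; exists x.
move=> [x xC xU].
have xV : x \in varM F `\` U by rewrite in_fsetD xU; apply/in_varM; exists C.
by exists [` xV].
Qed.

Lemma count_within_surplus (F : mclauseset) U : ~~ (varM F `<=` U) ->
  ((count (within U) F)%:Z + surplusM F <= deltaM F + (#|` varM F `&` U|)%:Z)%R.
Proof.
move=> notU; have := surplusM_le (fsubsetDl (varM F) U).
rewrite fsetD_eq0 => /(_ notU).
have := occ_add_count_within F U; have := cardfsID U (varM F).
rewrite /deltaM /cM /nM; lia.
Qed.

Lemma hall_var_proper (F G : mclauseset) : surplusM F = deltaM F ->
  uniq G -> {subset G <= F} -> ~~ (varM F `<=` varM G) -> hall G.
Proof.
move=> sF G_uniq GF notG U.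
have -> : count (within U) G = count (within (U `&` varM G)) G.
  apply: eq_in_count => C CG; rewrite /within fsubsetI andb_idr //.
  by move=> _; apply/fsubsetP => x xC; apply/in_varM; exists C.
apply: leq_trans (leq_count_uniq _ G_uniq GF) _.
have notUG : ~~ (varM F `<=` U `&` varM G).
  by apply: contra notG => /fsubset_trans; apply; exact: fsubsetIr.
have := count_within_surplus notUG; rewrite sF [X in (_ <= X)%R]addrC lerD2r.
rewrite lez_nat => /leq_trans; apply; apply/fsubset_leq_card.
by apply: fsubset_trans (fsubsetIr _ _) _; exact: fsubsetIl.
Qed.

Theorem VMU_underlying (F : mclauseset) : is_mclauseset F -> ~ msatisfiable F ->
  surplusM F = deltaM F -> VMU (underlying F).
Proof.
move=> F_clauses unsatF sF; split; first split => //.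
  by apply/allP => _ /imfsetP [C CF ->]; exact: (allP F_clauses).
move=> F' F'F unsatF'; rewrite var_underlying.
have subF : {subset enum_fset F' <= F}.
  by move=> C /(fsubsetP F'F) /imfsetP [D DF ->].
apply/eqP; rewrite eqEfsubset varM_sub //=; apply/negPn/negP => notF'.
have [f sat_f] := hall_satisfiable (hall_var_proper sF (fset_uniq F') subF notF').
by apply: unsatF'; exists f.
Qed.

Definition bot_clauseset : clauseset := [fset fset0].

Lemma var_sub_bot (G : clauseset) : G `<=` bot_clauseset -> var G = fset0.
Proof.
move=> sub; apply/fsetP => x; rewrite in_fset0; apply/negP.
move=> /in_varM [C /(fsubsetP sub)]; rewrite in_fset1 => /eqP ->.
by move=> /in_varC [l]; rewrite in_fset0.
Qed.

Lemma VMU_bot : VMU bot_clauseset.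
Proof.
split; last by move=> F' sub _; rewrite !var_sub_bot.
split.
  by apply/allP => C; rewrite in_fset1 => /eqP ->; apply/forallP => -[l].
by move=> [f sat_f]; have [l] := sat_f fset0 (fset11 _); rewrite in_fset0.
Qed.

(* By convention sigma = 0 when there are no variables. *)
Lemma not_SED_bot : ~ SED bot_clauseset.
Proof.
have var_bot : varM (as_multi bot_clauseset) = fset0 by apply: var_sub_bot.
case=> _; rewrite /surplus /surplusM /surplus_vals /delta /deltaM /nM var_bot.
rewrite (@eq_in_filter _ _ pred0) ?filter_pred0.
  by rewrite /cM /as_multi cardfs1 cardfs0.
by move=> V; rewrite fpowersetE fsubset0 => ->.
Qed.

Theorem corollary9p6 :
  ((forall F : clauseset, SED F -> USAT F -> VMU F) /\
   (exists F : clauseset, VMU F /\ ~ (SED F /\ USAT F))) /\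
  (forall F : mclauseset, is_mclauseset F -> ~ msatisfiable F ->
     surplusM F = deltaM F -> VMU (underlying F)).
Proof.
split; last exact: VMU_underlying.
split; last by exists bot_clauseset; split; [exact: VMU_bot | case=> /not_SED_bot].
move=> F [F_clauses sF] [_ unsatF]; rewrite -(underlying_as_multi F).
by apply: VMU_underlying; rewrite /msatisfiable ?underlying_as_multi.
Qed.
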